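(* Let $Y$ be a separable infinite-dimensional Hilbert space and let $U\in L(Y)$ be a unitary operator. For every $\varepsilon>0$ there exist a separable Hilbert space $X$, a diagonal operator $D_{\mathrm{diag}}\in L(X)$ with $\|D_{\mathrm{diag}}\|\le 1+\varepsilon$, and an isometry $V:Y\to X$ such that $V^*D_{\mathrm{diag}}V=U$.
   Context: An operator $D\in L(X)$ is diagonal if $X$ has an orthonormal basis consisting of eigenvectors of $D$. *)

From HB Require Import structures.
From mathcomp Require Import all_boot all_order all_algebra.
From mathcomp Require Import complex.
From mathcomp Require Import reals.
Set Implicit Arguments. Unset Strict Implicit. Unset Printing Implicit Defensive.
Import Order.TTheory GRing.Theory Num.Theory.
Local Open Scope ring_scope.
Local Open Scope complex_scope.

Record hilbert (R : realType) := Hilbert {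
  hcarrier :> lmodType R[i];
  hinner : hcarrier -> hcarrier -> R[i];
  hinnerDl : forall (a : R[i]) (x y z : hcarrier),
      hinner (a *: x + y) z = a * hinner x z + hinner y z;
  hinnerC : forall x y : hcarrier, hinner y x = (hinner x y)^*;
  hinner_ge0 : forall x : hcarrier, 0 <= hinner x x;
  hinner_eq0 : forall x : hcarrier, hinner x x = 0 -> x = 0;
  hcomplete : forall u : nat -> hcarrier,
      (forall e : R, 0 < e -> exists N, forall m n, (N <= m)%N -> (N <= n)%N ->
          Num.sqrt (complex.Re (hinner (u m - u n) (u m - u n))) < e) ->
      exists l : hcarrier, forall e : R, 0 < e -> exists N, forall n, (N <= n)%N ->
          Num.sqrt (complex.Re (hinner (u n - l) (u n - l))) < e
}.

Section HilbertDefs.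
Variable R : realType.

Definition hnorm (X : hilbert R) (x : X) : R :=
  Num.sqrt (complex.Re (hinner x x)).

Definition separable (X : hilbert R) : Prop :=
  exists d : nat -> X, forall (x : X) (e : R), 0 < e -> exists n, hnorm (x - d n) < e.

Definition infinite_dim (X : hilbert R) : Prop :=
  ~ exists (n : nat) (s : 'I_n -> X),
      forall x : X, exists c : 'I_n -> R[i], x = \sum_(i < n) c i *: s i.

Definition is_linear (X Y : hilbert R) (T : X -> Y) : Prop :=
  forall (a : R[i]) (x y : X), T (a *: x + y) = a *: T x + T y.

Definition bounded_op (X Y : hilbert R) (T : X -> Y) : Prop :=
  is_linear T /\ exists M : R, forall x : X, hnorm (T x) <= M * hnorm x.

Definition is_adjoint (X Y : hilbert R) (T : X -> Y) (S : Y -> X) : Prop :=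
  forall (x : X) (y : Y), hinner (T x) y = hinner x (S y).

Definition unitary_op (Y : hilbert R) (U : Y -> Y) : Prop :=
  bounded_op U /\ exists S : Y -> Y, is_adjoint U S /\
    (forall y, S (U y) = y) /\ (forall y, U (S y) = y).

Definition lin_isometry (Y X : hilbert R) (V : Y -> X) : Prop :=
  is_linear V /\ forall y : Y, hnorm (V y) = hnorm y.

Definition orthonormal_basis (X : hilbert R) (B : X -> Prop) : Prop :=
  (forall b, B b -> hinner b b = 1) /\
  (forall b c, B b -> B c -> b <> c -> hinner b c = 0) /\
  (forall x : X, (forall b, B b -> hinner x b = 0) -> x = 0).

Definition diagonal (X : hilbert R) (D : X -> X) : Prop :=
  bounded_op D /\ exists B : X -> Prop, orthonormal_basis B /\
    forall b, B b -> exists lam : R[i], D b = lam *: b.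

End HilbertDefs.

From HB Require Import structures.
From mathcomp Require Import all_boot all_order all_algebra.
From mathcomp Require Import complex.
From mathcomp Require Import reals.
From mathcomp Require Import cyclic cyclotomic.
From mathcomp Require Import boolp zify ring lra.
From mathcomp Require classical_sets.
Import Order.TTheory GRing.Theory Num.Theory.
Local Open Scope ring_scope.

(* Let w be a primitive K-th root of unity, K = m + 2, and let X = Y^K with
   D = c diag(w^0, ..., w^(K-1)) acting coordinatewise.  Put
   V y = kap (T_j y)_j  with  T_j = sum_(n <= m) w^(-j n) U^n.
   Orthogonality of characters, sum_j w^(j (a + n - n')) = K [n' = n + a] for
   a in {0, 1} (as |a + n - n'| < K), gives
   sum_j w^(j a) T_j^* T_j = K (m + 1 - a) U^a.
   Hence V^* V = kap^2 K (m + 1) = 1 and V^* D V = c kap^2 K m U = U for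
   kap^2 = 1 / (K (m + 1)) and c = (m + 1) / m, which is at most 1 + eps for
   m large. *)

Set Implicit Arguments. Unset Strict Implicit. Unset Printing Implicit Defensive.
Local Open Scope complex_scope.

Lemma conjcR (R : realType) (x : R) : (x%:C)^*%R = x%:C.
Proof. exact: conjc_real. Qed.

Section InnerProduct.
Variables (R : realType) (X : hilbert R).
Implicit Types (x y z : X) (a : R[i]).

Lemma hnorm_ge0 x : 0 <= hnorm x.
Proof. exact: sqrtr_ge0. Qed.

Lemma hinner_self x : hinner x x = (hnorm x ^+ 2)%:C.
Proof.
have := hinner_ge0 x; rewrite lecE => /andP[/eqP im0 re_ge0].
by rewrite /hnorm sqr_sqrtr //; case: (hinner x x) im0 => ? ? /= ->.
Qed.

Lemma hinner0l z : hinner 0 z = 0.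
Proof.
have := hinnerDl 1 0 0 z; rewrite scaler0 addr0 mul1r => h.
by apply/esym/(addrI (hinner 0 z)); rewrite addr0.
Qed.

Lemma hinnerZl a x z : hinner (a *: x) z = a * hinner x z.
Proof. by have := hinnerDl a x 0 z; rewrite addr0 hinner0l addr0. Qed.

Lemma hinner_addl x y z : hinner (x + y) z = hinner x z + hinner y z.
Proof. by have := hinnerDl 1 x y z; rewrite scale1r mul1r. Qed.

Lemma hinner0r z : hinner z 0 = 0.
Proof. by rewrite hinnerC hinner0l conjc0. Qed.

Lemma hinnerZr a x z : hinner z (a *: x) = (a^*)%R * hinner z x.
Proof. by rewrite hinnerC hinnerZl rmorphM /= -hinnerC. Qed.

Lemma hinner_addr x y z : hinner z (x + y) = hinner z x + hinner z y.
Proof. by rewrite hinnerC hinner_addl rmorphD /= -!hinnerC. Qed.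

Lemma hinner_suml (I : Type) (r : seq I) (P : pred I) (F : I -> X) z :
  hinner (\sum_(i <- r | P i) F i) z = \sum_(i <- r | P i) hinner (F i) z.
Proof.
by apply: (big_morph (fun x => hinner x z)) => [x y|]; rewrite ?hinner_addl ?hinner0l.
Qed.

Lemma hinner_sumr (I : Type) (r : seq I) (P : pred I) (F : I -> X) z :
  hinner z (\sum_(i <- r | P i) F i) = \sum_(i <- r | P i) hinner z (F i).
Proof.
by apply: (big_morph (fun x => hinner z x)) => [x y|]; rewrite ?hinner_addr ?hinner0r.
Qed.

Lemma hnormZ a (r : R) x : 0 <= r -> a * (a^*)%R = (r ^+ 2)%:C ->
  hnorm (a *: x) = r * hnorm x.
Proof.
move=> r_ge0 ha; rewrite {1}/hnorm hinnerZl hinnerZr mulrA ha hinner_self -rmorphM /=.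
by rewrite -exprMn sqrtr_sqr ger0_norm // mulr_ge0 ?hnorm_ge0.
Qed.

End InnerProduct.

Section LinearMaps.
Variables (R : realType) (X Y : hilbert R) (T : X -> Y).
Hypothesis linT : is_linear T.

Lemma is_linear0 : T 0 = 0.
Proof.
have := linT 1 0 0; rewrite scale1r addr0 scale1r => h.
by apply/esym/(addrI (T 0)); rewrite addr0.
Qed.

Lemma is_linearZ a x : T (a *: x) = a *: T x.
Proof. by have := linT a x 0; rewrite addr0 is_linear0 addr0. Qed.

Lemma is_linearD x y : T (x + y) = T x + T y.
Proof. by have := linT 1 x y; rewrite !scale1r. Qed.

Lemma is_linear_sum (I : Type) (r : seq I) (P : pred I) (F : I -> X) :
  T (\sum_(i <- r | P i) F i) = \sum_(i <- r | P i) T (F i).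
Proof. by apply: (big_morph T) => [x y|]; rewrite ?is_linearD ?is_linear0. Qed.

End LinearMaps.

Lemma is_linear_iter (R : realType) (X : hilbert R) (f : X -> X) n :
  is_linear f -> is_linear (iter n f).
Proof. by move=> linf; elim: n => [|n IH] a x y //=; rewrite IH linf. Qed.

Lemma is_linear_comb (R : realType) (X Y : hilbert R) N
    (F : 'I_N -> X -> Y) (c : 'I_N -> R[i]) :
  (forall n, is_linear (F n)) -> is_linear (fun x => \sum_(n < N) c n *: F n x).
Proof.
move=> linF a x y; rewrite scaler_sumr -big_split /=; apply: eq_bigr => n _.
by rewrite linF scalerDr !scalerA mulrC.
Qed.

Lemma adjoint_inverse_linear (R : realType) (Y : hilbert R) (U S : Y -> Y) :
  is_linear U -> (forall y, S (U y) = y) -> (forall y, U (S y) = y) -> is_linear S.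
Proof.
move=> linU SU US a x y; rewrite -{1}(US x) -{1}(US y).
by rewrite -(is_linearZ linU) -(is_linearD linU) SU.
Qed.

Section SumBounds.
Variables (R : realType) (k : nat) (a : 'I_k -> R).
Hypothesis a_ge0 : forall j, 0 <= a j.

Lemma ler_term_sum j : a j <= \sum_i a i.
Proof. by rewrite (bigD1 j) //= lerDl sumr_ge0. Qed.

Lemma ler_sqrt_sum_sqr_sum : Num.sqrt (\sum_j a j ^+ 2) <= \sum_j a j.
Proof.
have sum_ge0 : 0 <= \sum_j a j by exact: sumr_ge0.
rewrite -[leRHS](ger0_norm sum_ge0) -sqrtr_sqr ler_wsqrtr //.
rewrite [leRHS]expr2 mulr_suml; apply: ler_sum => j _.
by rewrite expr2 ler_wpM2l ?ler_term_sum.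
Qed.

Lemma ler_term_sqrt_sum_sqr j : a j <= Num.sqrt (\sum_i a i ^+ 2).
Proof.
rewrite -[leLHS](ger0_norm (a_ge0 j)) -sqrtr_sqr ler_wsqrtr //.
by rewrite (bigD1 j) //= lerDl sumr_ge0 // => i _; rewrite sqr_ge0.
Qed.

End SumBounds.

Section HilbertPower.
Variables (R : realType) (Y : hilbert R) (k : nat).
Implicit Types x y z : {ffun 'I_k -> Y}.

Definition pow_inner x y : R[i] := \sum_j hinner (x j) (y j).

Definition pow_sqnorm x : R := \sum_j hnorm (x j) ^+ 2.

Lemma pow_innerE x : pow_inner x x = (pow_sqnorm x)%:C.
Proof. by rewrite /pow_inner rmorph_sum; apply: eq_bigr => j _; rewrite hinner_self. Qed.

Lemma pow_innerDl a x y z : pow_inner (a *: x + y) z = a * pow_inner x z + pow_inner y z.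
Proof.
rewrite /pow_inner mulr_sumr -big_split /=; apply: eq_bigr => j _.
by rewrite !ffunE hinnerDl.
Qed.

Lemma pow_innerC x y : pow_inner y x = (pow_inner x y)^*.
Proof. by rewrite /pow_inner rmorph_sum; apply: eq_bigr => j _; rewrite hinnerC. Qed.

Lemma pow_inner_ge0 x : 0 <= pow_inner x x.
Proof. by apply: sumr_ge0 => j _; exact: hinner_ge0. Qed.

Lemma pow_inner_eq0 x : pow_inner x x = 0 -> x = 0.
Proof.
move=> /eqP; rewrite psumr_eq0 => [/allP x0|j _]; last exact: hinner_ge0.
apply/ffunP => j; rewrite ffunE; apply: hinner_eq0.
by apply/eqP/x0; rewrite mem_index_enum.
Qed.

Lemma hnorm_coord_ler x j : hnorm (x j) <= Num.sqrt (pow_sqnorm x).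
Proof. by apply: ler_term_sqrt_sum_sqr => i; exact: hnorm_ge0. Qed.

Lemma pow_norm_ler_sum x : Num.sqrt (pow_sqnorm x) <= \sum_j hnorm (x j).
Proof. by apply: ler_sqrt_sum_sqr_sum => j; exact: hnorm_ge0. Qed.

Lemma pow_norm_lt x (e : R) : 0 < e -> (forall j, hnorm (x j) < e / k.+1%:R) ->
  Num.sqrt (pow_sqnorm x) < e.
Proof.
move=> e_gt0 small; apply: le_lt_trans (pow_norm_ler_sum x) _.
apply: (@le_lt_trans _ _ (\sum_(j < k) (e / k.+1%:R))).
  by apply: ler_sum => j _; exact: ltW.
rewrite sumr_const card_ord -[_ *+ k]mulr_natr mulrAC ltr_pdivrMr ?ltr0Sn //.
by rewrite ltr_pM2l // ltr_nat.
Qed.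

Lemma pow_complete (u : nat -> {ffun 'I_k -> Y}) :
  (forall e : R, 0 < e -> exists N, forall m n, (N <= m)%N -> (N <= n)%N ->
      Num.sqrt (complex.Re (pow_inner (u m - u n) (u m - u n))) < e) ->
  exists l, forall e : R, 0 < e -> exists N, forall n, (N <= n)%N ->
      Num.sqrt (complex.Re (pow_inner (u n - l) (u n - l))) < e.
Proof.
move=> cauchy_u.
have lim_coord j : exists lj : Y, forall e : R, 0 < e ->
    exists N, forall n, (N <= n)%N -> hnorm (u n j - lj) < e.
  apply: hcomplete => e e_gt0; have [N uN] := cauchy_u e e_gt0.
  exists N => m n mN nN; apply: le_lt_trans (uN m n mN nN).
  by rewrite pow_innerE /=; have := hnorm_coord_ler (u m - u n) j; rewrite !ffunE.
have [l ul] := choice lim_coord.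
exists [ffun j => l j] => e e_gt0.
have ek_gt0 : 0 < e / k.+1%:R by rewrite divr_gt0 ?ltr0Sn.
have [N uN] := choice (fun j => ul j _ ek_gt0).
exists (\max_j N j) => n nN; rewrite pow_innerE; apply: pow_norm_lt => // j.
by rewrite !ffunE; apply: uN; apply: leq_trans nN; exact: leq_bigmax.
Qed.

Definition hilbert_pow : hilbert R :=
  @Hilbert R {ffun 'I_k -> Y} pow_inner pow_innerDl pow_innerC pow_inner_ge0
    pow_inner_eq0 pow_complete.

Lemma hnorm_pow (x : hilbert_pow) : hnorm x = Num.sqrt (pow_sqnorm x).
Proof. by rewrite /hnorm /= pow_innerE. Qed.

Lemma separable_pow : separable Y -> separable hilbert_pow.
Proof.
move=> [d dense].
pose dk (n : nat) : hilbert_pow :=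
  if unpickle n : option {ffun 'I_k -> nat} is Some f then [ffun j => d (f j)] else 0.
exists dk => x e e_gt0.
have ek_gt0 : 0 < e / k.+1%:R by rewrite divr_gt0 ?ltr0Sn.
have [g xg] := choice (fun j => dense (x j) _ ek_gt0).
exists (pickle [ffun j => g j]).
rewrite hnorm_pow /dk pickleK; apply: pow_norm_lt => // j.
by rewrite !ffunE.
Qed.

End HilbertPower.

Section OrthonormalBasis.
Import classical_sets.
Local Open Scope classical_set_scope.
Variables (R : realType) (X : hilbert R).

Definition orthonormal (A : set X) :=
  (forall b, A b -> hinner b b = 1) /\
  (forall b c, A b -> A c -> b <> c -> hinner b c = 0).

Lemma orthonormal_chain (F : set (set X)) : F `<=` orthonormal ->
  total_on F subset -> orthonormal (\bigcup_(A in F) A).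
Proof.
move=> F_on F_total; split=> [b [A FA Ab]|b c [A FA Ab] [B FB Bc] bc].
  by have [+ _] := F_on A FA; apply.
have [AB|BA] := F_total A B FA FB.
  by have [_] := F_on B FB; apply=> //; exact: AB.
by have [_] := F_on A FA; apply=> //; exact: BA.
Qed.

Lemma orthonormal_setU1 (A : set X) u : orthonormal A -> hinner u u = 1 ->
  (forall b, A b -> hinner u b = 0) -> orthonormal (A `|` [set u]).
Proof.
move=> [A1 A_orth] u1 uA; split=> [b [Ab|->] //|b c [Ab|->] [Ac|->] bc //].
- exact: A1.
- exact: A_orth.
- by rewrite hinnerC uA // conjc0.
- exact: uA.
Qed.

Lemma exists_orthonormal_basis : exists B : X -> Prop, orthonormal_basis B.
Proof.
have [A [[A1 A_orth] A_max]] := Zorn_bigcup orthonormal_chain.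
exists A; do 2!split=> //; move=> x xA.
apply: contrapT => /eqP x_neq0.
have nx_neq0 : hnorm x != 0.
  apply: contra x_neq0 => /eqP nx0; apply/eqP/hinner_eq0.
  by rewrite hinner_self nx0 expr0n.
pose u := (hnorm x)^-1%:C *: x.
have xu : hinner x u = (hnorm x)%:C.
  rewrite hinnerZr conjcR hinner_self -rmorphM /=.
  by rewrite expr2 mulrA mulVf // mul1r.
have u1 : hinner u u = 1 by rewrite hinnerZl xu -rmorphM /= mulVf.
have uA b : A b -> hinner u b = 0 by move=> Ab; rewrite hinnerZl xA // mulr0.
apply: (A_max (A `|` [set u])); last exact: orthonormal_setU1.
split=> [b Ab|AuA]; first by left.
have /uA u0 : A u by apply: AuA; right.
by move: u1; rewrite u0 => /eqP; rewrite eq_sym oner_eq0.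
Qed.

End OrthonormalBasis.

Section RootsOfUnity.
Variable R : realType.

Lemma prim_root_exists n : (0 < n)%N -> exists w : R[i], n.-primitive_root w.
Proof.
move=> n_gt0; have [r Dp] := closed_field_poly_normal ('X^n - 1 : {poly R[i]}).
rewrite (monicP _) ?monicXnsubC // scale1r in Dp.
have rn1 : all n.-unity_root r by apply/allP=> z; rewrite -root_prod_XsubC -Dp.
have size_r : (n <= size r)%N.
  by rewrite -ltnS -(size_prod_XsubC r id) -Dp size_XnsubC.
have r_uniq : uniq r.
  by rewrite -separable.separable_prod_XsubC -Dp separable_Xn_sub_1 // pnatr_eq0 -lt0n.
by have /hasP[w] := has_prim_root n_gt0 rn1 r_uniq size_r; exists w.
Qed.

Variables (K : nat) (w : R[i]).
Hypothesis w_prim : K.-primitive_root w.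

Lemma sum_prim_root_exp e :
  \sum_(j < K) w ^+ (j * e) = if (K %| e)%N then K%:R else 0.
Proof.
have wK := prim_expr_order w_prim.
under eq_bigr do rewrite mulnC exprM.
case: ifP => [|K_ndvd_e].
  rewrite (prim_order_dvd w_prim) => /eqP ->.
  by under eq_bigr do rewrite expr1n; rewrite sumr_const card_ord.
have we1 : w ^+ e != 1 by rewrite -(prim_order_dvd w_prim) K_ndvd_e.
have := subrX1 (w ^+ e) K; rewrite -exprM mulnC exprM wK expr1n subrr.
by move/esym/eqP; rewrite mulf_eq0 subr_eq0 (negbTE we1) => /eqP.
Qed.

Lemma norm_prim_root : `|w| = 1.
Proof.
have /eqP : `|w| ^+ K = 1 by rewrite -normrX (prim_expr_order w_prim) normr1.
by rewrite pexpr_eq1 ?(prim_order_gt0 w_prim) // => /eqP.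
Qed.

Lemma conjc_prim_root_exp j n : (n <= K)%N -> (w ^+ (j * n))^*%R = w ^+ (j * (K - n)).
Proof.
move=> nK; set z := w ^+ (j * n).
have zz : z * z^*%R = 1 by rewrite -sqr_normc /z normrX norm_prim_root !expr1n.
have z_inv : z * w ^+ (j * (K - n)) = 1.
  by rewrite /z -exprD -mulnDr subnKC // mulnC exprM (prim_expr_order w_prim) expr1n.
have z_neq0 : z != 0 by apply: contra_eq_neq zz => ->; rewrite mul0r eq_sym oner_eq0.
by apply: (mulfI z_neq0); rewrite zz z_inv.
Qed.

End RootsOfUnity.

Section PowerBasis.
Variables (R : realType) (Y : hilbert R) (k : nat).

Definition pow_unit (j : 'I_k) (b : Y) : hilbert_pow Y k :=
  [ffun i => if i == j then b else 0].

Lemma hinner_pow_unitr (x : hilbert_pow Y k) j b :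
  hinner x (pow_unit j b) = hinner (x j) b.
Proof.
rewrite /= /pow_inner (bigD1 j) //= big1 ?addr0 => [|i /negbTE ij].
  by rewrite ffunE eqxx.
by rewrite ffunE ij hinner0r.
Qed.

Lemma hinner_pow_unit j b j' b' :
  hinner (pow_unit j b) (pow_unit j' b') = if j' == j then hinner b b' else 0.
Proof.
by rewrite hinner_pow_unitr ffunE; case: eqP => _; rewrite ?hinner0l.
Qed.

Lemma orthonormal_basis_pow (B : Y -> Prop) : orthonormal_basis B ->
  orthonormal_basis (fun x => exists j b, B b /\ x = pow_unit j b).
Proof.
move=> [B1 [B_orth B_max]]; split; last split.
- by move=> _ [j [b [Bb ->]]]; rewrite hinner_pow_unit eqxx B1.
- move=> _ _ [j [b [Bb ->]]] [j' [b' [Bb' ->]]] neq.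
  rewrite hinner_pow_unit; case: eqP => // j'j; subst j'.
  by apply: B_orth => // bb'; apply: neq; rewrite bb'.
- move=> x x_orth; apply/ffunP => j; rewrite ffunE; apply: B_max => b Bb.
  by rewrite -hinner_pow_unitr; apply: x_orth; exists j, b.
Qed.

End PowerBasis.

(* [K - n'] stands for [-n'] modulo [K]; since [-K < a + n - n' < K], the sum is
   divisible by [K] only when it equals [K]. *)
Lemma dvdn_shiftE (K N n n' a : nat) : (a <= 1)%N -> (n < N)%N -> (n' < N)%N ->
  (N < K)%N -> (K %| a + (n + (K - n')))%N = (n' == n + a).
Proof.
move=> a1 nN n'N NK; apply/idP/eqP => [/dvdnP[q]|->].
  by case: q => [|[|q]]; rewrite ?mul0n ?mul1n ?mulSn; lia.
by have -> : (a + (n + (K - (n + a))) = K)%N by lia.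
Qed.

Lemma sumr_ord_eq (V : nmodType) (N c : nat) (F : nat -> V) :
  \sum_(i < N) (if i == c :> nat then F i else 0) = if (c < N)%N then F c else 0.
Proof.
case: ltnP => [cN|Nc].
  rewrite (bigD1 (Ordinal cN)) //= eqxx big1 ?addr0 // => i /negbTE ic.
  by rewrite -val_eqE in ic; rewrite ic.
by rewrite big1 // => i _; rewrite ifF //; apply/negbTE; rewrite neq_ltn (leq_trans _ Nc).
Qed.

Lemma sumr_ord_shift (V : nmodType) (N a : nat) (v : V) : (a <= N)%N ->
  \sum_(n < N) (if (n + a < N)%N then v else 0) = v *+ (N - a).
Proof.
move=> aN; rewrite -(big_mkord xpredT (fun n => if (n + a < N)%N then v else 0)).
rewrite (big_cat_nat (n := N - a)) ?leq_subr //=.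
rewrite [X in _ + X]big1_seq => [|n]; last first.
  by rewrite mem_index_iota => nN; rewrite ifF //; lia.
rewrite addr0 (eq_big_nat _ _ (F2 := fun => v)) ?sumr_const_nat ?subn0 // => n.
by rewrite andTb => nNa; rewrite ifT //; lia.
Qed.

Section PhaseSums.
Variables (R : realType) (Y : hilbert R) (U S : Y -> Y).
Hypotheses (linU : is_linear U) (linS : is_linear S).
Hypotheses (adjUS : is_adjoint U S) (SU : forall y, S (U y) = y).
Variables (K m : nat) (w : R[i]).
Hypotheses (w_prim : K.-primitive_root w) (mK : (m.+1 < K)%N).

Lemma iter_inv n y : iter n S (iter n U y) = y.
Proof. by elim: n y => [|n IH] y //=; rewrite -[S (iter n S _)]iterS iterSr SU IH. Qed.

Lemma iter_adjoint n y z : hinner (iter n U y) z = hinner y (iter n S z).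
Proof. by elim: n y z => [|n IH] y z //=; rewrite adjUS IH -iterS iterSr. Qed.

Definition phase_sum j y := \sum_(n < m.+1) w ^+ (j * (K - n)) *: iter n U y.

Definition phase_sum_adj j z := \sum_(n < m.+1) w ^+ (j * n) *: iter n S z.

Lemma is_linear_phase_sum j : is_linear (phase_sum j).
Proof.
by apply: (@is_linear_comb _ _ _ m.+1 (fun n => iter n U)) => n; exact: is_linear_iter.
Qed.

Lemma is_linear_phase_sum_adj j : is_linear (phase_sum_adj j).
Proof.
by apply: (@is_linear_comb _ _ _ m.+1 (fun n => iter n S)) => n; exact: is_linear_iter.
Qed.

Lemma phase_sum_adjoint j : is_adjoint (phase_sum j) (phase_sum_adj j).
Proof.
move=> y z; rewrite hinner_suml hinner_sumr; apply: eq_bigr => n _.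
rewrite hinnerZl hinnerZr iter_adjoint (conjc_prim_root_exp w_prim) //.
by apply: ltnW; apply: ltn_trans mK.
Qed.

Lemma sum_phase_sum_adj_phase_sum a y : (a <= 1)%N ->
  \sum_(j < K) w ^+ (j * a) *: phase_sum_adj j (phase_sum j y) =
  (K * (m.+1 - a))%:R *: iter a U y.
Proof.
move=> a1.
have expand (j : 'I_K) : w ^+ (j * a) *: phase_sum_adj j (phase_sum j y) =
    \sum_(n < m.+1) \sum_(n' < m.+1)
      w ^+ (j * (a + (n + (K - n')))) *: iter n S (iter n' U y).
  rewrite scaler_sumr; apply: eq_bigr => n _.
  rewrite (is_linear_sum (is_linear_iter n linS)) scalerA scaler_sumr.
  apply: eq_bigr => n' _; rewrite (is_linearZ (is_linear_iter n linS)).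
  by rewrite !scalerA -!exprD -!mulnDr addnA.
rewrite (eq_bigr _ (fun j _ => expand j)) exchange_big /=.
rewrite (eq_bigr (fun n : 'I_m.+1 => if (n + a < m.+1)%N then K%:R *: iter a U y else 0)).
  by rewrite sumr_ord_shift ?(leq_trans a1) // -scaler_nat scalerA -natrM mulnC.
move=> n _; rewrite exchange_big /=.
under eq_bigr => n' _ do rewrite -scaler_suml (sum_prim_root_exp w_prim).
rewrite (eq_bigr (fun n' : 'I_m.+1 => if n' == (n + a)%N :> nat
    then K%:R *: iter n S (iter n' U y) else 0)) => [|n' _]; last first.
  by rewrite (dvdn_shiftE a1 (ltn_ord n) (ltn_ord n') mK); case: eqP; rewrite ?scale0r.
by rewrite (sumr_ord_eq _ _ (fun n' => K%:R *: iter n S (iter n' U y))) iterD iter_inv.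
Qed.

End PhaseSums.

Section Dilation.
Variables (R : realType) (Y : hilbert R) (K m : nat) (w : R[i]).
Hypotheses (w_prim : K.-primitive_root w) (mK : (m.+1 < K)%N).

Definition phase_diag (c : R) (x : hilbert_pow Y K) : hilbert_pow Y K :=
  [ffun j : 'I_K => (c%:C * w ^+ j) *: x j].

Lemma hnorm_phase_diag c x : 0 <= c -> hnorm (phase_diag c x) = c * hnorm x.
Proof.
move=> c_ge0.
have phase_sqr (j : 'I_K) : (c%:C * w ^+ j) * (c%:C * w ^+ j)^*%R = (c ^+ 2)%:C.
  rewrite rmorphM /= conjcR mulrACA -sqr_normc normrX (norm_prim_root w_prim).
  by rewrite !expr1n mulr1 -rmorphM expr2.
rewrite !hnorm_pow /pow_sqnorm.
under eq_bigr => j _ do rewrite ffunE (hnormZ _ c_ge0 (phase_sqr j)) exprMn.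
by rewrite -mulr_sumr sqrtrM ?sqr_ge0 // sqrtr_sqr ger0_norm.
Qed.

Lemma diagonal_phase_diag c : 0 <= c -> diagonal (phase_diag c).
Proof.
move=> c_ge0; split.
  split=> [a x y|]; last by exists c => x; rewrite hnorm_phase_diag.
  by apply/ffunP => j; rewrite !ffunE scalerDr !scalerA mulrC.
have [B B_basis] := exists_orthonormal_basis Y.
exists (fun x => exists j b, B b /\ x = pow_unit j b).
split=> [|_ [j [b [_ ->]]]]; first exact: orthonormal_basis_pow.
exists (c%:C * w ^+ j); apply/ffunP => i; rewrite !ffunE.
by case: eqP => [->|_]; rewrite ?scaler0.
Qed.

Variables (U S : Y -> Y) (kap : R).
Hypotheses (linU : is_linear U) (linS : is_linear S).
Hypotheses (adjUS : is_adjoint U S) (SU : forall y, S (U y) = y).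

Definition dilation (y : Y) : hilbert_pow Y K :=
  [ffun j : 'I_K => kap%:C *: phase_sum U K m w j y].

Definition dilation_adj (x : hilbert_pow Y K) : Y :=
  \sum_(j < K) kap%:C *: phase_sum_adj S m w j (x j).

Lemma dilation_adjoint : is_adjoint dilation dilation_adj.
Proof.
move=> y x; rewrite /= /pow_inner hinner_sumr; apply: eq_bigr => j _.
by rewrite ffunE hinnerZl hinnerZr conjcR (phase_sum_adjoint adjUS w_prim mK).
Qed.

Lemma dilation_adjK : kap ^+ 2 * (K * m.+1)%:R = 1 ->
  forall y, dilation_adj (dilation y) = y.
Proof.
move=> kap_norm y.
have term (j : 'I_K) : kap%:C *: phase_sum_adj S m w j (dilation y j) =
    (kap ^+ 2)%:C *: (w ^+ (j * 0) *: phase_sum_adj S m w j (phase_sum U K m w j y)).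
  rewrite ffunE (is_linearZ (is_linear_phase_sum_adj linS m w j)) !scalerA.
  by rewrite muln0 expr0 mulr1 rmorphXn.
rewrite /dilation_adj (eq_bigr _ (fun j _ => term j)) -scaler_sumr.
rewrite (sum_phase_sum_adj_phase_sum linS SU w_prim mK) // subn0 scalerA.
by rewrite -(rmorph_nat (real_complex R)) -rmorphM /= kap_norm scale1r.
Qed.

Lemma dilation_isometry : kap ^+ 2 * (K * m.+1)%:R = 1 -> lin_isometry dilation.
Proof.
move=> kap_norm; split=> [a x y|y].
  apply/ffunP => j; rewrite !ffunE (is_linear_phase_sum linU K m w j).
  by rewrite scalerDr !scalerA mulrC.
by rewrite {1}/hnorm dilation_adjoint dilation_adjK.
Qed.

Lemma dilation_compress c : c * kap ^+ 2 * (K * m)%:R = 1 ->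
  forall y, dilation_adj (phase_diag c (dilation y)) = U y.
Proof.
move=> c_kap_norm y.
have term (j : 'I_K) : kap%:C *: phase_sum_adj S m w j (phase_diag c (dilation y) j) =
    (c * kap ^+ 2)%:C *: (w ^+ (j * 1) *: phase_sum_adj S m w j (phase_sum U K m w j y)).
  rewrite !ffunE !(is_linearZ (is_linear_phase_sum_adj linS m w j)) !scalerA muln1.
  by congr (_ *: _); rewrite rmorphM rmorphXn /=; ring.
rewrite /dilation_adj (eq_bigr _ (fun j _ => term j)) -scaler_sumr.
rewrite (sum_phase_sum_adj_phase_sum linS SU w_prim mK) // subn1 scalerA.
by rewrite -(rmorph_nat (real_complex R)) -rmorphM /= c_kap_norm scale1r.
Qed.

End Dilation.

Lemma exists_succ_ratio_le (R : realType) (eps : R) : 0 < eps ->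
  exists2 m : nat, (0 < m)%N & m.+1%:R / m%:R <= 1 + eps.
Proof.
move=> eps_gt0; set m := (Num.Def.archi_bound eps^-1).+1; exists m => //.
rewrite -addn1 natrD mulrDl divff ?pnatr_eq0 // lerD2l ler_pdivrMr ?ltr0n //.
have eps_inv_ge0 : 0 <= eps^-1 by rewrite invr_ge0 ltW.
rewrite -ler_pdivrMl // mulr1 ltW // (lt_le_trans (archi_boundP eps_inv_ge0)) //.
by rewrite ler_nat.
Qed.

Theorem proposition4p8 (R : realType) (Y : hilbert R) :
  separable Y -> infinite_dim Y ->
  forall U : Y -> Y, unitary_op U ->
  forall eps : R, 0 < eps ->
  exists (X : hilbert R) (D : X -> X) (V : Y -> X),
    separable X /\ diagonal D /\
    (forall x : X, hnorm (D x) <= (1 + eps) * hnorm x) /\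
    lin_isometry V /\
    exists W : X -> Y, is_adjoint V W /\ forall y : Y, W (D (V y)) = U y.
Proof.
(* The construction does not need [Y] to be infinite-dimensional. *)
move=> Ysep _ U [[linU _] [S [adjUS [SU US]]]] eps eps_gt0.
have linS := adjoint_inverse_linear linU SU US.
have [m m_gt0 c_le] := exists_succ_ratio_le eps_gt0.
have mK : (m.+1 < m.+2)%N by [].
have [w w_prim] := prim_root_exists R (ltn0Sn m.+1).
pose c : R := m.+1%:R / m%:R.
pose kap : R := Num.sqrt (m.+2 * m.+1)%:R^-1.
have kap2 : kap ^+ 2 = (m.+2 * m.+1)%:R^-1 by rewrite sqr_sqrtr ?invr_ge0.
have kap_norm : kap ^+ 2 * (m.+2 * m.+1)%:R = 1 by rewrite kap2 mulVf // pnatr_eq0.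
have c_kap_norm : c * kap ^+ 2 * (m.+2 * m)%:R = 1.
  have m_pos : (0 : R) < m%:R by rewrite ltr0n.
  by rewrite kap2 /c !natrM; field; apply/and3P; split; apply: lt0r_neq0; lra.
have c_ge0 : 0 <= c by rewrite divr_ge0.
exists (hilbert_pow Y m.+2), (phase_diag w c), (dilation m.+2 m w U kap).
split; first exact: separable_pow.
split; first exact: diagonal_phase_diag.
split=> [x|].
  by rewrite (hnorm_phase_diag w_prim) //; apply: ler_wpM2r; first exact: hnorm_ge0.
split; first exact: (dilation_isometry w_prim mK linU linS adjUS SU).
exists (dilation_adj m w S kap); split; first exact: dilation_adjoint.
exact: (dilation_compress w_prim mK linS SU c_kap_norm).
Qed.
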